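(* Let $\mathbb{F}$ be a field of characteristic $p$, $\mathbb{E}$ an extension field, $f\in\mathbb{F}[x]$, and let $M\le\mathbb{E}^*$ be an automatically non-standard $f$-subgroup of size $m$. Let $L$ be a finite subgroup of $\mathbb{E}^*$ with $M\le L$, and let $k=|L|/|M|$. Then $L$ is an automatically non-standard $g$-subgroup for $g(x)=f(x^k)$.
   Context: $\phi_{p,m}$ is the $m$th cyclotomic polynomial reduced mod $p$ (if $p>0$); for $\gcd(m,p)=1$ its zeros are the primitive $m$th roots of unity. An $f$-sequence is a two-way infinite sequence with $f(\sigma)s=0$, $(\sigma s)_n=s_{n+1}$. Definition: for $m>1$ with $\gcd(m,p)=1$ if $p>0$, if $f\in\mathbb{F}[x]$ divides $(x^m-1)/((x-1)\phi_{p,m}(x))$ and an $f$-sequence $s$ of period $m$ (over an extension of $\mathbb{F}$) has $M=\{s_0,\ldots,s_{m-1}\}$ a subgroup of size $m$, then $M$ is an automatically non-standard $f$-subgroup. *)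

From HB Require Import structures.
From mathcomp Require Import all_boot all_order all_algebra.
From mathcomp Require Import all_field.
Set Implicit Arguments. Unset Strict Implicit. Unset Printing Implicit Defensive.
Import Order.TTheory GRing.Theory Num.Theory.
Local Open Scope ring_scope.

Definition char_is (F : fieldType) (p : nat) : Prop :=
  if p == 0%N then [pchar F] =i pred0 else p \in [pchar F].

(* phi_{p,m}: the m-th cyclotomic polynomial (over Z) reduced into F;
   since F has characteristic p, this is the reduction mod p viewed in F[x]. *)
Definition phi_pm (F : fieldType) (m : nat) : {poly F} :=
  map_poly (fun z : int => z%:~R) 'Phi_m.

(* s is an f-sequence: f(sigma) s = 0, with (sigma s)_n = s_{n+1};
   the coefficients of f in F are mapped into E by the field embedding emb. *)
Definition f_sequence (F E : fieldType) (emb : {rmorphism F -> E})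
    (f : {poly F}) (s : int -> E) : Prop :=
  forall n : int, \sum_(i < size f) emb f`_i * s (n + (i : nat)%:Z) = 0.

(* M (given as a duplicate-free list of its elements) is a subgroup of E^* *)
Definition units_subgroup (E : fieldType) (M : seq E) : Prop :=
  [/\ uniq M, 0 \notin M, 1 \in M,
      {in M &, forall x y, x * y \in M} & {in M, forall x, x^-1 \in M}].

Definition ans_subgroup (p : nat) (F E : fieldType) (emb : {rmorphism F -> E})
    (f : {poly F}) (M : seq E) : Prop :=
  let m := size M in
  [/\ (1 < m)%N,
      (0 < p)%N -> coprime m p,
      f %| ('X^m - 1) %/ (('X - 1) * phi_pm F m),
      units_subgroup M &
      exists s : int -> E,
        [/\ f_sequence emb f s,
            (forall n : int, s (n + m%:Z) = s n) &
            M =i [seq s (i%:Z) | i <- iota 0 m]]].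

From HB Require Import structures.
From mathcomp Require Import all_boot all_order all_algebra.
From mathcomp Require Import all_field.
From mathcomp Require Import zify ring.
Set Implicit Arguments. Unset Strict Implicit. Unset Printing Implicit Defensive.
Import GRing.Theory.
Local Open Scope ring_scope.

(* The proof checks the five defining conditions for L:
   - Group theory (coset_decomposition): L is a disjoint union of k cosets
     a_r * M, so |L| = k * m; moreover |L| is prime to the characteristic
     (pchar_not_dvd_size), because x^|L| = 1 on L.
   - Cyclotomic polynomials: 'Phi_(k * m) divides 'Phi_m(x^k) over Z (proved
     via primitive roots of unity in algC), so composing the divisibility
     f | (x^m - 1) / ((x - 1) phi_m) with x^k gives the one for k * m.
   - Sequences: if s is the f-sequence listing M, the interleaving of the k
     sequences a_r * s, i.e. n * k + r |-> a_r * s_n, is an f(x^k)-sequence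
     of period k * m whose first k * m terms list the cosets, i.e. L. *)

(* Over the algebraic numbers, 'Phi_(k * m) divides 'Phi_m(x^k): every
   primitive (k * m)-th root of unity z has z^k a primitive m-th root. *)
Lemma Cyclotomic_dvd_comp_Xn_algC (m k : nat) : (0 < m)%N -> (0 < k)%N ->
  map_poly (intr : int -> algC) 'Phi_(k * m)
    %| map_poly (intr : int -> algC) ('Phi_m \Po 'X^k).
Proof.
move=> m_gt0 k_gt0; have km_gt0 : (0 < k * m)%N by rewrite muln_gt0 k_gt0.
have [z prim_z] := C_prim_root_exists km_gt0.
have prim_pow (w : algC) : (k * m).-primitive_root w -> m.-primitive_root (w ^+ k).
  by move=> prim_w; have := dvdn_prim_root prim_w (dvdn_mull k (dvdnn m)); rewrite mulnK.
rewrite map_comp_poly map_polyXn (Cintr_Cyclotomic prim_z).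
rewrite (Cintr_Cyclotomic (prim_pow z prim_z)) /cyclotomic -big_filter.
rewrite -(big_map (fun i : 'I_(k * m) => z ^+ i) xpredT (fun x => 'X - x%:P)).
apply: uniq_roots_dvdp.
  apply/allP => w /mapP [i]; rewrite mem_filter => /andP [coprime_i _] ->.
  rewrite /root horner_comp hornerXn -/(root _ _) (root_cyclotomic (prim_pow z prim_z)).
  by apply: prim_pow; rewrite prim_root_exp_coprime.
rewrite uniq_rootsE map_inj_in_uniq ?filter_uniq ?index_enum_uniq //.
move=> i j _ _ /eqP; rewrite (eq_prim_root_expr prim_z) !modn_small //.
by move/eqP/val_inj.
Qed.

Lemma Cyclotomic_comp_Xn (m k : nat) : (0 < m)%N -> (0 < k)%N ->
  exists Q : {poly int}, 'Phi_m \Po 'X^k = 'Phi_(k * m) * Q.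
Proof.
move=> m_gt0 k_gt0; exists (('Phi_m \Po 'X^k) %/ 'Phi_(k * m)).
have ratr_intr (p : {poly int}) :
    map_poly ratr (map_poly (intr : int -> rat) p) = map_poly (intr : int -> algC) p.
  by rewrite -map_poly_comp; apply: eq_map_poly => z /=; rewrite ratr_int.
have dvd_int : 'Phi_(k * m) %| 'Phi_m \Po 'X^k.
  by rewrite -dvdp_rat_int -(dvdp_map (@ratr algC)) !ratr_intr Cyclotomic_dvd_comp_Xn_algC.
rewrite mulrC Pdiv.IdomainUnit.divpK //.
by rewrite (monicP (Cyclotomic_monic _)) unitr1.
Qed.

Lemma phi_pm_comp_Xn (F : fieldType) (m k : nat) : (0 < m)%N -> (0 < k)%N ->
  exists Q : {poly F}, phi_pm F m \Po 'X^k = phi_pm F (k * m) * Q.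
Proof.
move=> m_gt0 k_gt0; have [Q eQ] := Cyclotomic_comp_Xn m_gt0 k_gt0.
exists (map_poly intr Q).
by rewrite /phi_pm -(map_polyXn (intr : int -> F)) -map_comp_poly eQ rmorphM.
Qed.

Lemma Cyclotomic1 : 'Phi_1 = 'X - 1.
Proof. by rewrite -[RHS](prod_Cyclotomic (isT : (0 < 1)%N)) big_seq1. Qed.

Lemma phi_pm_monic (F : fieldType) (m : nat) : phi_pm F m \is monic.
Proof. exact/monic_map/Cyclotomic_monic. Qed.

(* ('X - 1) * phi_{p,m} divides 'X^m - 1 when m > 1: 'X^m - 1 is the product
   of the 'Phi_d over the divisors d of m, among which are 1 and m. *)
Lemma phi_pm_dvd_Xn_sub1 (F : fieldType) (m : nat) : (1 < m)%N ->
  ('X - 1) * phi_pm F m %| 'X^m - 1.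
Proof.
move=> m_gt1; have m_gt0 : (0 < m)%N by apply: ltnW.
have prodPhi := prod_Cyclotomic m_gt0.
rewrite (big_rem m) -?dvdn_divisors // (big_rem 1%N) /= in prodPhi; last first.
  by rewrite mem_rem_uniq ?divisors_uniq // inE /= -dvdn_divisors // dvd1n andbT neq_ltn m_gt1.
have -> : ('X^m - 1 : {poly F}) = map_poly intr ('X^m - 1 : {poly int}).
  by rewrite rmorphB /= map_polyXn rmorph1.
rewrite -prodPhi Cyclotomic1 !rmorphM /= rmorphB /= map_polyX rmorph1.
by rewrite mulrCA dvdp_mul2l ?dvdp_mulr // -size_poly_eq0 size_XsubC.
Qed.

Lemma dvd_cyclotomic_quotient_comp (F : fieldType) (f : {poly F}) (m k : nat) :
  (1 < m)%N -> (0 < k)%N ->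
  f %| ('X^m - 1) %/ (('X - 1) * phi_pm F m) ->
  f \Po 'X^k %| ('X^(k * m) - 1) %/ (('X - 1) * phi_pm F (k * m)).
Proof.
move=> m_gt1 k_gt0; set A := _ %/ _ => dvd_f.
have eA : A * (('X - 1) * phi_pm F m) = 'X^m - 1.
  exact: divpK (phi_pm_dvd_Xn_sub1 F m_gt1).
have [Q eQ] := phi_pm_comp_Xn F (ltnW m_gt1) k_gt0.
have [W eW] : exists W, 'X^k - 1 = W * ('X - 1 : {poly F}).
  by apply/dvdpP; rewrite -polyC1 dvdp_XsubCl /root !hornerE expr1n subrr.
have eX : 'X^(k * m) - 1 = (A \Po 'X^k) * W * Q * (('X - 1) * phi_pm F (k * m)).
  have : ('X^m - 1) \Po 'X^k = 'X^(k * m) - 1 :> {poly F}.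
    by rewrite comp_polyB comp_Xn_poly -exprM mulnC comp_polyC.
  rewrite -eA !comp_polyM comp_polyB comp_polyX comp_polyC eQ eW => <-; ring.
have nz : ('X - 1) * phi_pm F (k * m) != 0.
  by rewrite mulf_neq0 ?monic_neq0 ?phi_pm_monic // -polyC1 monicXsubC.
by rewrite eX mulpK // !dvdp_mulr // dvdp_comp_poly.
Qed.

Section ListSubgroups.
Variable E : fieldType.
Implicit Types (L M S R : seq E) (x y : E).

Lemma units_subgroup_neq0 L x : units_subgroup L -> x \in L -> x != 0.
Proof. by case=> _ L0 _ _ _ xL; apply: contraNneq L0 => <-. Qed.

Lemma units_subgroup_size_gt0 L : units_subgroup L -> (0 < size L)%N.
Proof. by case=> _ _ L1 _ _; case: (L) L1. Qed.

(* A duplicate-free set S of units, stable under right multiplication by the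
   subgroup M, is a disjoint union of cosets a * M: we pick one a in S, remove
   its coset a * M from S and recurse on the rest. *)
Lemma coset_decomposition M S : units_subgroup M ->
  uniq S -> 0 \notin S -> {in S & M, forall x y, x * y \in S} ->
  exists R, perm_eq S [seq a * b | a <- R, b <- M].
Proof.
move=> UM; have [uM _ M1 MM MV] := UM.
elim: {S}(size S).+1 {-2}S (ltnSn (size S)) => // N IH [|a S] size_S uS S0 closedS.
  by exists [::].
set A := [seq a * b | b <- M]; set S' := [seq x <- a :: S | x \notin A].
have a0 : a != 0 by apply: contraNneq S0 => <-; rewrite mem_head.
have aA : a \in A by apply/mapP; exists 1; rewrite ?mulr1.
have [R' permS'] : exists R', perm_eq S' [seq a * b | a <- R', b <- M].
  apply: IH.
  - by rewrite size_filter /= aA /= (leq_ltn_trans (count_size _ S)).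
  - by rewrite filter_uniq.
  - by rewrite mem_filter negb_and S0 orbT.
  move=> x y; rewrite !mem_filter => /andP [xA xS] yM; rewrite closedS // andbT.
  apply: contra xA => /mapP [b bM xyE]; apply/mapP; exists (b * y^-1).
    by rewrite MM ?MV.
  by rewrite mulrA -xyE mulrK // unitfE (units_subgroup_neq0 UM).
exists (a :: R'); rewrite -(perm_filterC (mem A)); apply: perm_cat permS'.
apply: uniq_perm; first by rewrite filter_uniq.
  by rewrite map_inj_uniq //; apply: mulfI.
move=> x; rewrite mem_filter andb_idr // => /mapP [b bM ->].
by rewrite closedS ?mem_head.
Qed.

(* Lagrange for list subgroups: every x in L satisfies x ^+ |L| = 1, since
   multiplication by x permutes L and hence fixes the product of L. *)
Lemma units_subgroup_exp_size L x : units_subgroup L -> x \in L ->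
  x ^+ size L = 1.
Proof.
move=> UL xL; have [uL _ _ LL LV] := UL.
have x0 := units_subgroup_neq0 UL xL.
have permL : perm_eq L [seq x * y | y <- L].
  have uxL : uniq [seq x * y | y <- L] by rewrite map_inj_uniq //; apply: mulfI.
  rewrite uniq_perm // => z; apply/idP/idP => [zL|/mapP [y yL ->]]; last exact: LL.
  apply/mapP; exists (x^-1 * z); last by rewrite mulVKf.
  by rewrite LL ?LV.
have prodL0 : \prod_(y <- L) y != 0.
  by rewrite prodf_seq_neq0; apply/allP => y /(units_subgroup_neq0 UL).
have prod_const : \prod_(y <- L) x = x ^+ size L.
  by elim: (L) => [|y s IHs]; rewrite ?big_nil ?big_cons ?IHs ?exprS.
apply: (mulIf prodL0); rewrite mul1r [RHS](perm_big _ permL) big_map big_split /=.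
by rewrite prod_const.
Qed.

(* In characteristic p > 0 a finite subgroup of E^* has order prime to p:
   if p divided |L| = p * r, the polynomial ('X^r - 1)^p = 'X^|L| - 1 would
   force all |L| elements of L to be roots of 'X^r - 1. *)
Lemma pchar_not_dvd_size (p : nat) L : p \in [pchar E] -> units_subgroup L ->
  ~~ (p %| size L)%N.
Proof.
move=> charE UL; have [uL _ _ _ _] := UL; have p_prime := pcharf_prime charE.
apply/negP => /dvdnP [r sizeL].
have r_gt0 : (0 < r)%N.
  by have := units_subgroup_size_gt0 UL; rewrite sizeL muln_gt0 => /andP [].
have roots_L : all (root ('X^r - 1)) L.
  apply/allP => x xL; rewrite /root !hornerE.
  have : (x ^+ r - 1) ^+ p = 0.
    rewrite exprDn_pchar ?pnatE // exprNn_pchar ?pnatE // expr1n -exprM.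
    by rewrite -sizeL units_subgroup_exp_size // subrr.
  by move/eqP; rewrite expf_eq0 => /andP [_ /eqP ->].
have := max_poly_roots _ roots_L uL.
rewrite size_XnsubC // -size_poly_eq0 size_XnsubC // => /(_ isT).
have := prime_gt1 p_prime; rewrite sizeL ltnS; nia.
Qed.

End ListSubgroups.

Definition periodic (T : Type) (s : int -> T) (m : nat) : Prop :=
  forall n : int, s (n + m%:Z) = s n.

Lemma int_divmod (k : nat) (N : int) : (0 < k)%N ->
  exists q : int, exists2 r : nat, (r < k)%N & N = q * k%:Z + r%:Z.
Proof.
move=> k_gt0; have k_neq0 : k%:Z != 0 by rewrite eqz_nat -lt0n.
exists (N %/ k)%Z; exists `|(N %% k)%Z|%N.
  by rewrite -ltz_nat gez0_abs ?modz_ge0 // ltz_pmod // ltz_nat.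
by rewrite gez0_abs ?modz_ge0 // -divz_eq.
Qed.

Section InterleavedSequences.
Variables (F E : fieldType) (emb : {rmorphism F -> E}).

Definition interleave (k : nat) (t : nat -> int -> E) (N : int) : E :=
  t `|(N %% k)%Z|%N (N %/ k)%Z.

Lemma interleaveE (k : nat) (t : nat -> int -> E) (q : int) (r : nat) :
  (r < k)%N -> interleave k t (q * k%:Z + r%:Z) = t r q.
Proof.
move=> r_lt_k; have k_neq0 : k%:Z != 0 by rewrite eqz_nat -lt0n (leq_ltn_trans _ r_lt_k).
rewrite /interleave divzMDl // modzMDl divz_nat modz_nat.
by rewrite divn_small // modn_small // addr0.
Qed.

Lemma sum_coef_widen (g : {poly F}) (T : nat -> E) (B : nat) : (size g <= B)%N ->
  \sum_(i < size g) emb g`_i * T i = \sum_(i < B) emb g`_i * T i.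
Proof.
move=> size_g; rewrite (big_ord_widen _ (fun i => emb g`_i * T i) size_g) big_mkcond.
apply: eq_bigr => i _; case: ifP => // /negbT; rewrite -leqNgt => i_ge.
by rewrite nth_default // rmorph0 mul0r.
Qed.

Lemma sum_dvdn_mask (k a : nat) (c : nat -> E) : (0 < k)%N ->
  \sum_(i < a * k) (if (k %| i)%N then c i else 0) = \sum_(j < a) c (j * k)%N.
Proof.
case: k => // k _; elim: a => [|a IHa]; first by rewrite mul0n !big_ord0.
rewrite mulSnr big_split_ord /= IHa [RHS]big_ord_recr /=; congr (_ + _).
rewrite big_ord_recl /= addn0 dvdn_mull // big1 ?addr0 // => i _.
rewrite /bump /= add1n dvdn_addr ?dvdn_mull //.
by case: ifP => // /(dvdn_leq (ltn0Sn _)); rewrite ltnS leqNgt ltn_ord.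
Qed.

Lemma sum_coef_comp_Xn (h : {poly F}) (k : nat) (T : nat -> E) : (0 < k)%N ->
  \sum_(i < size (h \Po 'X^k)) emb (h \Po 'X^k)`_i * T i
  = \sum_(j < size h) emb h`_j * T (j * k)%N.
Proof.
move=> k_gt0; rewrite (@sum_coef_widen _ _ (size h * k)); last first.
  by rewrite comp_poly_Xn // size_poly.
transitivity (\sum_(i < size h * k) if (k %| i)%N then emb h`_(i %/ k) * T i else 0).
  apply: eq_bigr => i _; rewrite coef_comp_poly_Xn //.
  by case: ifP => _; rewrite ?rmorph0 ?mul0r.
rewrite (sum_dvdn_mask _ (fun i => emb h`_(i %/ k) * T i)) //.
by apply: eq_bigr => j _; rewrite mulnK.
Qed.

Lemma f_sequence_scale (f : {poly F}) (c : E) (s : int -> E) :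
  f_sequence emb f s -> f_sequence emb f (fun n => c * s n).
Proof.
move=> fs n; under eq_bigr => i _ do rewrite mulrCA.
by rewrite -mulr_sumr fs mulr0.
Qed.

Lemma interleave_f_sequence (f : {poly F}) (k : nat) (t : nat -> int -> E) :
  (0 < k)%N -> (forall r, (r < k)%N -> f_sequence emb f (t r)) ->
  f_sequence emb (f \Po 'X^k) (interleave k t).
Proof.
move=> k_gt0 ft N; have [q [r r_lt_k ->]] := int_divmod N k_gt0.
rewrite (sum_coef_comp_Xn f (fun i => interleave k t (q * k%:Z + r%:Z + i%:Z))) //.
rewrite -[RHS](ft r r_lt_k q); apply: eq_bigr => j _.
have -> : q * k%:Z + r%:Z + (j * k)%N%:Z = (q + j%:Z) * k%:Z + r%:Z.
  by rewrite PoszM; ring.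
by rewrite interleaveE.
Qed.

Lemma interleave_periodic (m k : nat) (t : nat -> int -> E) :
  (0 < k)%N -> (forall r, (r < k)%N -> periodic (t r) m) ->
  periodic (interleave k t) (k * m).
Proof.
move=> k_gt0 per_t N; have [q [r r_lt_k ->]] := int_divmod N k_gt0.
have -> : q * k%:Z + r%:Z + (k * m)%N%:Z = (q + m%:Z) * k%:Z + r%:Z.
  by rewrite PoszM; ring.
by rewrite !interleaveE // per_t.
Qed.

Lemma interleave_image (m k : nat) (t : nat -> int -> E) : (0 < k)%N ->
  [seq interleave k t i%:Z | i <- iota 0 (k * m)]
    =i [seq t r q%:Z | r <- iota 0 k, q <- iota 0 m].
Proof.
move=> k_gt0 x; apply/mapP/allpairsP => [[i] | [[r q]]].
  rewrite mem_iota add0n => i_lt ->; exists (i %% k, i %/ k)%N.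
  rewrite !mem_iota !add0n /= ltn_pmod // ltn_divLR // mulnC; split => //.
  by rewrite {1}(divn_eq i k) PoszD PoszM interleaveE ?ltn_pmod.
rewrite !mem_iota /= => -[r_lt q_lt ->]; exists (q * k + r)%N.
  by rewrite mem_iota add0n; nia.
by rewrite PoszD PoszM interleaveE.
Qed.

End InterleavedSequences.

Lemma char_coprime_size (p : nat) (F E : fieldType) (emb : {rmorphism F -> E})
    (L : seq E) :
  char_is F p -> (0 < p)%N -> units_subgroup L -> coprime (size L) p.
Proof.
rewrite /char_is => + p_gt0; rewrite eqn0Ngt p_gt0 /= => charF UL.
rewrite coprime_sym prime_coprime ?(pcharf_prime charF) //.
exact: pchar_not_dvd_size (rmorph_pchar emb charF) UL.
Qed.

Theorem mainTheorem12 (p : nat) (F E : fieldType) (emb : {rmorphism F -> E})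
    (f : {poly F}) (M L : seq E) :
  char_is F p ->
  ans_subgroup p emb f M ->
  units_subgroup L ->
  {subset M <= L} ->
  ans_subgroup p emb (f \Po 'X^(size L %/ size M)) L.
Proof.
move=> charF [m_gt1 _ dvd_f UM [s [fs per_s Ms]]] UL subML.
have [uL L0 _ LL _] := UL.
have [R permL] := coset_decomposition UM uL L0 (fun x y xL yM => LL x y xL (subML y yM)).
set m := size M in m_gt1 dvd_f per_s Ms *; set k := size R.
have sizeL : size L = (k * m)%N by rewrite (perm_size permL) size_allpairs.
have k_gt0 : (0 < k)%N.
  by have := units_subgroup_size_gt0 UL; rewrite sizeL muln_gt0 => /andP [].
rewrite /ans_subgroup sizeL mulnK ?(ltnW m_gt1) //; split => //.
- exact: leq_trans m_gt1 (leq_pmull _ k_gt0).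
- by move=> p_gt0; rewrite -sizeL (char_coprime_size emb).
- exact: dvd_cyclotomic_quotient_comp.
pose t r q := R`_r * s q; exists (interleave k t); split.
- by apply: interleave_f_sequence => // r _; apply: f_sequence_scale.
- by apply: interleave_periodic => // r _ n; rewrite /t per_s.
have eqR : R =i mkseq (nth 0 R) k by move=> y; rewrite mkseq_nth.
move=> x; rewrite interleave_image // (perm_mem permL) (mem_allpairs _ eqR Ms).
by rewrite allpairs_mapl allpairs_mapr.
Qed.
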